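(* Let $(Q,\rightarrow)$ be a finite transition system, $\mathscr{R}$ a preorder on $Q$ and $\mathscr{P}\subseteq\mathscr{R}$ an equivalence relation with a representative $E.\mathrm{rep}\in E$ fixed for each block $E$ of $\mathscr{P}$. Assume there is no $(\mathscr{P},\mathscr{R})$-splitter transition of type 1, and let $E\rightarrow B$ be a $(\mathscr{P},\mathscr{R})$-splitter transition of type 2. Let $P'=\mathrm{Split}(P_{\mathscr{P}},E\cap\rightarrow^{-1}(B))$. Then $\mathscr{P}_{P'}$ is strictly included in $\mathscr{P}$ and contains every $\mathscr{R}$-block-stable equivalence relation included in $\mathscr{P}$.
   Context: A preorder is a reflexive transitive relation; its blocks are $[q]_{\mathscr{R}}=\{q'\mid q\,\mathscr{R}\,q'\wedge q'\,\mathscr{R}\,q\}$. $\mathscr{R}(X)=\{q'\mid\exists q\in X.\ q\,\mathscr{R}\,q'\}$, $\rightarrow^{-1}(Y)=\{q\mid\exists y\in Y.\ q\rightarrow y\}$; for sets, $X\rightarrow Y$ means some $x\in X,y\in Y$ have $x\rightarrow y$, and $X\,\mathscr{R}\,Y$ means $(X\times Y)\cap\mathscr{R}\neq\emptyset$. $P_{\mathscr{P}}$ is the partition into blocks of $\mathscr{P}$; $\mathscr{P}_P=\bigcup_{E\in P}E\times E$. For a block $E$ of $\mathscr{P}$ and a block $B$ of $\mathscr{R}$, $\mathrm{RelCount}_{(\mathscr{P},\mathscr{R})}(E,B)=|\{E'\in P_{\mathscr{P}}\mid E.\mathrm{rep}\rightarrow E'\wedge B\,\mathscr{R}\,E'\}|$.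 A $(\mathscr{P},\mathscr{R})$-splitter transition of type 1 is a pair ($E$ block of $\mathscr{P}$, $B$ block of $\mathscr{R}$) with $E\rightarrow B$ and $\mathrm{RelCount}_{(\mathscr{P},\mathscr{R})}(E,B)=0$. A $(\mathscr{P},\mathscr{R})$-splitter transition of type 2 is a pair ($E$, $B$) with $E.\mathrm{rep}\rightarrow B$, $\mathrm{RelCount}_{(\mathscr{P},\mathscr{R})}(E,B)=|\{[b]_{\mathscr{P}}\subseteq B\mid E.\mathrm{rep}\rightarrow b\}|$, and $E\not\subseteq\rightarrow^{-1}(B)$. $\mathrm{Split}(P,M)$ replaces each block $E$ of $P$ with $E\cap M\neq\emptyset$ and $E\not\subseteq M$ by $E\cap M$ and $E\setminus M$. An equivalence relation $\mathscr{P}''\subseteq\mathscr{R}$ is $\mathscr{R}$-block-stable if for all $b,d,d'$ with $d\,\mathscr{P}''\,d'$: $d\in\rightarrow^{-1}(\mathscr{R}(b))\iff d'\in\rightarrow^{-1}(\mathscr{R}(b))$. *)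

From mathcomp Require Import all_boot.
Set Implicit Arguments. Unset Strict Implicit. Unset Printing Implicit Defensive.

Section Defs.
Variable Q : finType.

Definition is_preorder (R : rel Q) := reflexive R /\ transitive R.
Definition is_equiv (P : rel Q) := reflexive P /\ symmetric P /\ transitive P.
Definition subrel_of (P R : rel Q) := forall x y, P x y -> R x y.

Definition block (R : rel Q) (q : Q) : {set Q} := [set q' | R q q' && R q' q].
Definition is_block (R : rel Q) (X : {set Q}) := exists q, X = block R q.

Definition Rimg (R : rel Q) (X : {set Q}) : {set Q} :=
  [set q' | [exists q in X, R q q']].
Definition pre (tr : rel Q) (Y : {set Q}) : {set Q} :=
  [set q | [exists y in Y, tr q y]].
Definition set_tr (tr : rel Q) (X Y : {set Q}) :=
  [exists x in X, exists y in Y, tr x y].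
Definition set_rel (R : rel Q) (X Y : {set Q}) :=
  [exists x in X, exists y in Y, R x y].

Definition part (P : rel Q) : {set {set Q}} := [set block P q | q : Q].
Definition rel_of_part (Pt : {set {set Q}}) : rel Q :=
  fun x y => [exists E in Pt, (x \in E) && (y \in E)].

Definition RelCount (tr R P : rel Q) (rep : {set Q} -> Q) (E B : {set Q}) : nat :=
  #|[set E' in part P | set_tr tr [set rep E] E' && set_rel R B E']|.

Definition splitter1 (tr R P : rel Q) (rep : {set Q} -> Q) (E B : {set Q}) :=
  [/\ E \in part P, is_block R B, set_tr tr E B & RelCount tr R P rep E B = 0].

Definition splitter2 (tr R P : rel Q) (rep : {set Q} -> Q) (E B : {set Q}) :=
  [/\ E \in part P, is_block R B, set_tr tr [set rep E] B,
      RelCount tr R P rep E B =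
        #|[set block P b | b in [set b | tr (rep E) b & block P b \subset B]]|
    & ~~ (E \subset pre tr B)].

Definition is_split (M E : {set Q}) := (E :&: M != set0) && ~~ (E \subset M).
Definition split_part (Pt : {set {set Q}}) (M : {set Q}) : {set {set Q}} :=
  [set E in Pt | ~~ is_split M E]
  :|: [set E :&: M | E in Pt & is_split M E]
  :|: [set E :\: M | E in Pt & is_split M E].

Definition block_stable (R P'' : rel Q) (tr : rel Q) :=
  [/\ is_equiv P'', subrel_of P'' R &
    forall b d d', P'' d d' ->
      (d \in pre tr (Rimg R [set b])) = (d' \in pre tr (Rimg R [set b]))].

Definition strict_subrel (P1 P2 : rel Q) :=
  subrel_of P1 P2 /\ exists x y, P2 x y /\ ~~ P1 x y.

End Defs.

From mathcomp Require Import all_boot.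
Set Implicit Arguments. Unset Strict Implicit. Unset Printing Implicit Defensive.

(* The split separates [rep E], which reaches [B], from an element of [E] that
   does not, so the refinement is strict.  For maximality it suffices that a
   block-stable [P''] never separates two elements [x, x'] of [E] of which [x]
   reaches [B = [q]_R].  Stability gives [x' -> y] with [q R y]; the absence of
   type-1 splitters gives [rep E -> z] with [y R z]; the counting condition of
   the type-2 splitter forces the [P]-block of [z] into [B], hence [y] lies in
   [B] too. *)

Section Blocks.
Variables (Q : finType) (P : rel Q).
Hypothesis HP : is_equiv P.

Lemma mem_block x y : (y \in block P x) = P x y.
Proof.
case: HP => _ [Ps _]; rewrite inE.
by apply/andP/idP => [[] // | Pxy]; split=> //; rewrite Ps.
Qed.

Lemma block_in_part q : block P q \in part P.
Proof. by apply/imsetP; exists q. Qed.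

Lemma mem_block_rel q x y : x \in block P q -> y \in block P q -> P x y.
Proof.
case: HP => _ [Ps Pt]; rewrite !mem_block => Pqx Pqy.
by rewrite Ps in Pqx; apply: Pt Pqx Pqy.
Qed.

Lemma part_mem_rel F x y : F \in part P -> P x y -> (x \in F) = (y \in F).
Proof.
case: HP => _ [Ps Pt] /imsetP [q _ ->] Pxy; rewrite !mem_block.
by apply/idP/idP => Pq; [apply: Pt Pq Pxy | apply: Pt Pq _; rewrite Ps].
Qed.

Lemma rel_of_part_blocks x y : rel_of_part (part P) x y = P x y.
Proof.
apply/existsP/idP => [[_ /andP [/imsetP [q _ ->] /andP []]] | Pxy].
  exact: mem_block_rel.
case: HP => Pr _.
by exists (block P x); rewrite block_in_part !mem_block Pxy Pr.
Qed.

End Blocks.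

Section SplitPart.
Variables (Q : finType) (Pt : {set {set Q}}) (M : {set Q}).

Lemma split_part_refines F :
  F \in split_part Pt M -> exists2 G, G \in Pt & F \subset G.
Proof.
rewrite !inE => /orP [/orP [/andP [PtF _] | /imsetP [G]] | /imsetP [G]].
- by exists F.
- by rewrite inE => /andP [PtG _] ->; exists G; rewrite ?subsetIl.
- by rewrite inE => /andP [PtG _] ->; exists G; rewrite ?subsetDl.
Qed.

Lemma subrel_split_part :
  subrel_of (rel_of_part (split_part Pt M)) (rel_of_part Pt).
Proof.
move=> x y /existsP [F /andP [/split_part_refines [G PtG /subsetP sFG] xyF]].
by case/andP: xyF => xF yF; apply/existsP; exists G; rewrite PtG !sFG.
Qed.

Lemma split_part_separates x y :
  x \in M -> y \notin M -> ~~ rel_of_part (split_part Pt M) x y.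
Proof.
move=> xM yM; apply/existsP => [[F /andP [+ /andP [xF yF]]]].
rewrite !inE => /orP [/orP [/andP [_ /negP []] | /imsetP [G _ eF]] | /imsetP [G _ eF]].
- apply/andP; split; first by apply/set0Pn; exists x; rewrite inE xF.
  by apply/subsetPn; exists y.
- by move: yF; rewrite eF inE (negbTE yM) andbF.
- by move: xF; rewrite eF inE xM.
Qed.

Lemma split_part_rel G x y : G \in Pt -> x \in G -> y \in G ->
  (x \in M) = (y \in M) -> rel_of_part (split_part Pt M) x y.
Proof.
move=> PtG xG yG xyM; apply/existsP.
have [sG | nsG] := boolP (is_split M G); last first.
  by exists G; rewrite !inE PtG nsG xG yG.
have GsM : G \in [set E in Pt | is_split M E] by rewrite inE PtG sG.
case xM : (x \in M).
  exists (G :&: M); rewrite !inE xG yG -xyM xM.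
  by rewrite (imset_f (fun E => E :&: M) GsM) orbT.
exists (G :\: M); rewrite !inE xG yG -xyM xM.
by rewrite (imset_f (fun E => E :\: M) GsM) orbT.
Qed.

End SplitPart.

Section TypeTwoSplitter.
Variables (Q : finType) (tr R P : rel Q) (rep : {set Q} -> Q).
Hypotheses (HR : is_preorder R) (HP : is_equiv P) (HPR : subrel_of P R).
Hypothesis Hno1 : forall E B, ~ splitter1 tr R P rep E B.

Lemma set_tr1 x Y : set_tr tr [set x] Y = (x \in pre tr Y).
Proof.
rewrite inE; apply/existsP/idP => [[x' /andP [/set1P -> //]] | xY].
by exists x; rewrite set11.
Qed.

Lemma mem_Rimg1 q y : (y \in Rimg R [set q]) = R q y.
Proof.
rewrite inE; apply/existsP/idP => [[q' /andP [/set1P -> //]] | qy].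
by exists q; rewrite set11.
Qed.

Lemma no_splitter1_rep_succ E x y : E \in part P -> x \in E -> tr x y ->
  exists2 z, tr (rep E) z & R y z.
Proof.
move=> PE xE xy; case: (HR) => Rr Rt.
have: RelCount tr R P rep E (block R y) != 0.
  apply/eqP => cnt0; apply: (@Hno1 E (block R y)); split => //.
    by exists y.
  by apply/existsP; exists x; rewrite xE; apply/existsP; exists y; rewrite inE Rr xy.
rewrite cards_eq0 => /set0Pn [E']; rewrite inE set_tr1.
case/andP=> /imsetP [p _ ->] /andP [repp /existsP [w /andP [yw /existsP [z' zR]]]].
case/andP: zR => z'p wz'; move: repp; rewrite inE => /existsP [z /andP [zp repz]].
exists z => //; move: yw; rewrite inE => /andP [yw _].
by apply: (Rt w) yw _; apply: (Rt z') wz' _; apply: HPR; apply: mem_block_rel z'p zp.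
Qed.

Variables (E : {set Q}) (q : Q).
Hypothesis PE : E \in part P.
Hypothesis Hcnt : RelCount tr R P rep E (block R q) =
  #|[set block P b | b in [set b | tr (rep E) b & block P b \subset block R q]]|.

(* The blocks counted on the right of [Hcnt] are among those counted by
   [RelCount], so the counting condition makes the two families equal. *)
Lemma type2_succ_block_sub E' : E' \in part P -> rep E \in pre tr E' ->
  set_rel R (block R q) E' -> E' \subset block R q.
Proof.
case: (HR) (HP) => Rr _ [Pr _].
pose S := [set F in part P | set_tr tr [set rep E] F & set_rel R (block R q) F].
pose T := [set block P b | b in [set b | tr (rep E) b & block P b \subset block R q]].
have sTS : T \subset S.
  apply/subsetP => F /imsetP [b]; rewrite inE => /andP [repb bB] ->.
  have bb : b \in block P b by rewrite mem_block.
  rewrite inE block_in_part set_tr1 /=; apply/andP; split.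
    by rewrite inE; apply/existsP; exists b; rewrite bb.
  by apply/existsP; exists b; rewrite (subsetP bB) //; apply/existsP; exists b; rewrite bb Rr.
have eST : S = T by apply/eqP; rewrite eq_sym eqEcard sTS -Hcnt; exact: leqnn.
move=> PE' repE' BE'; have : E' \in T by rewrite -eST inE PE' set_tr1 repE'.
by case/imsetP=> b; rewrite inE => /andP [_ bB] ->.
Qed.

Lemma succ_Rimg_pre x y : x \in E -> tr x y -> R q y -> x \in pre tr (block R q).
Proof.
move=> xE xy qy; case: (HR) (HP) => Rr Rt [Pr _].
have [z repz yz] := no_splitter1_rep_succ PE xE xy.
have zz : z \in block P z by rewrite mem_block.
have /subsetP/(_ z zz) : block P z \subset block R q.
  apply: type2_succ_block_sub; rewrite ?block_in_part //.
    by rewrite inE; apply/existsP; exists z; rewrite zz.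
  apply/existsP; exists q; rewrite inE !Rr /=.
  by apply/existsP; exists z; rewrite zz (Rt y).
rewrite inE => /andP [_ zq].
by rewrite inE; apply/existsP; exists y; rewrite xy inE qy (Rt z).
Qed.

Lemma block_stable_pre P'' x x' : block_stable R P'' tr -> P'' x x' ->
  x' \in E -> x \in pre tr (block R q) -> x' \in pre tr (block R q).
Proof.
case=> _ _ Hst xx' x'E; rewrite inE => /existsP [z /andP [zB xz]].
have : x \in pre tr (Rimg R [set q]).
  rewrite inE; apply/existsP; exists z; rewrite xz mem_Rimg1 andbT.
  by move: zB; rewrite inE => /andP [].
rewrite (Hst q _ _ xx') inE => /existsP [y /andP [+ x'y]]; rewrite mem_Rimg1.
exact: succ_Rimg_pre x'E x'y.
Qed.

End TypeTwoSplitter.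

Theorem lemma6 (Q : finType) (tr R P : rel Q) (rep : {set Q} -> Q)
  (HR : is_preorder R) (HP : is_equiv P) (HPR : subrel_of P R)
  (Hrep : forall E, E \in part P -> rep E \in E)
  (Hno1 : forall E B, ~ splitter1 tr R P rep E B)
  (E B : {set Q}) (H2 : splitter2 tr R P rep E B) :
  let P' := split_part (part P) (E :&: pre tr B) in
  strict_subrel (rel_of_part P') P /\
  (forall P'' : rel Q, is_equiv P'' -> subrel_of P'' P ->
     block_stable R P'' tr -> subrel_of P'' (rel_of_part P')).
Proof.
case: H2 => PE [q ->{B}] repB Hcnt nsubE P'.
have repM : rep E \in E :&: pre tr (block R q) by rewrite inE Hrep // -set_tr1.
split; first split.
- by move=> x y /subrel_split_part; rewrite rel_of_part_blocks.
- case/subsetPn: nsubE => y yE yB; exists (rep E), y; split.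
    by rewrite -rel_of_part_blocks //; apply/existsP; exists E; rewrite PE Hrep.
  by apply: split_part_separates; rewrite // inE negb_and yB orbT.
move=> P'' [_ [P''s _]] sP''P stable d d' dd'.
have Pdd' := sP''P _ _ dd'.
apply: (@split_part_rel _ _ _ (block P d)); rewrite ?block_in_part ?mem_block //.
  by case: HP.
rewrite !in_setI -(part_mem_rel HP PE Pdd'); case: (boolP (d \in E)) => //= dE.
have d'E : d' \in E by rewrite -(part_mem_rel HP PE Pdd').
have pre_stable := block_stable_pre HR HP HPR Hno1 PE Hcnt stable.
by apply/idP/idP; apply: pre_stable; rewrite // P''s.
Qed.
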